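(* Let $R$ and $S$ be transverse étale equivalence relations on a compact, metrizable, zero-dimensional space $X$. Then the equivalence relation $R\vee S$ on $X$ generated by $R$ and $S$ equals $(r\times s)(R\times_XS)$ and also equals $(r\times s)(S\times_XR)$, and the maps $r\times s:R\times_XS\to R\vee S$ and $r\times s:S\times_XR\to R\vee S$ are bijections.
   Context: An étale equivalence relation on $X$ is a countable equivalence relation $R\subset X\times X$ with a locally compact, Hausdorff, second countable topology in which the product $(x,y)\cdot(y,z)=(x,z)$ of composable pairs is continuous, the inverse is a homeomorphism, and the range map $r(x,y)=x$ is a local homeomorphism. For equivalence relations $R,S$ on $X$, $R\times_XS=\{((x,y),(y,z)):(x,y)\in R,(y,z)\in S\}$ with the relative topology from $R\times S$, and $r((x,y),(y,z))=x$, $s((x,y),(y,z))=z$, $(r\times s)((x,y),(y,z))=(x,z)$. $R$ and $S$ are transverse if $R\cap S=\Delta_X=\{(x,x):x\in X\}$ and there is a homeomorphism $h:R\times_XS\to S\times_XR$ with $r\circ h=r$ and $s\circ h=s$. *)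

From HB Require Import structures.
From mathcomp Require Import all_boot all_order all_algebra.
From mathcomp Require Import all_classical all_reals all_analysis.
From mathcomp Require Import Rstruct Rstruct_topology.
From Stdlib Require Import Rdefinitions.

Set Implicit Arguments.
Unset Strict Implicit.
Unset Printing Implicit Defensive.
Import Order.TTheory GRing.Theory Num.Theory.
Local Open Scope classical_set_scope.
Local Open Scope ring_scope.

Definition metrizable (X : topologicalType) : Prop :=
  exists d : X -> X -> Rdefinitions.R,
    [/\ (forall x y, 0 <= d x y),
        (forall x y, d x y = 0 <-> x = y),
        (forall x y, d x y = d y x),
        (forall x y z, d x z <= d x y + d y z) &
        (forall (x : X) (A : set X),
            nbhs x A <-> exists2 e : Rdefinitions.R, 0 < e & [set y | d x y < e] `<=` A)].

Definition zero_dim_space (X : topologicalType) : Prop :=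
  exists2 B : set (set X), basis B & B `<=` clopen.

Definition local_homeo (G X : topologicalType) (f : G -> X) : Prop :=
  forall g : G, exists U : set G,
    [/\ [/\ open U, U g & open (f @` U)],
        (forall a b, U a -> U b -> f a = f b -> a = b),
        {within U, continuous f} &
        exists h : X -> G,
          (forall y, (f @` U) y -> U (h y) /\ f (h y) = y) /\
          {within f @` U, continuous h}].

Definition is_equivalence (X : Type) (E : set (X * X)) : Prop :=
  [/\ (forall x, E (x, x)),
      (forall x y, E (x, y) -> E (y, x)) &
      (forall x y z, E (x, y) -> E (y, z) -> E (x, z))].

(* An étale equivalence relation on X: the relation is the image of the
   injective map i : G -> X * X, and G carries the étale topology. *)
Definition etale_eqrel (X G : topologicalType) (i : G -> X * X) : Prop :=
  [/\ [/\ injective i,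
          is_equivalence (range i) &
          (forall x : X, countable [set y | range i (x, y)])],
      [/\ locally_compact [set: G], hausdorff_space G & @second_countable G],
      (exists m : G * G -> G,
          (forall p : G * G, (i p.1).2 = (i p.2).1 ->
               i (m p) = ((i p.1).1, (i p.2).2)) /\
          {within [set p : G * G | (i p.1).2 = (i p.2).1], continuous m}),
      (* inverse is a homeomorphism (it is an involution) *)
      (exists inv : G -> G,
          [/\ (forall g, i (inv g) = ((i g).2, (i g).1)),
              (forall g, inv (inv g) = g) & continuous inv]) &
      local_homeo (fun g => (i g).1)].

(* R x_X S as a subset of R x S (relative topology from the product). *)
Definition fiber_prod (X G H : Type) (iR : G -> X * X) (iS : H -> X * X)
  : set (G * H) := [set p | (iR p.1).2 = (iS p.2).1].

Definition rs_map (X G H : Type) (iR : G -> X * X) (iS : H -> X * X)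
  (p : G * H) : X * X := ((iR p.1).1, (iS p.2).2).

Definition transverse (X GR GS : topologicalType)
  (iR : GR -> X * X) (iS : GS -> X * X) : Prop :=
  (forall x y, range iR (x, y) -> range iS (x, y) -> x = y) /\
  exists (h : GR * GS -> GS * GR) (k : GS * GR -> GR * GS),
    [/\ (forall p, fiber_prod iR iS p -> fiber_prod iS iR (h p)) /\
        (forall q, fiber_prod iS iR q -> fiber_prod iR iS (k q)),
        (forall p, fiber_prod iR iS p -> k (h p) = p),
        (forall q, fiber_prod iS iR q -> h (k q) = q),
        {within fiber_prod iR iS, continuous h} /\
        {within fiber_prod iS iR, continuous k} &
        (forall p, fiber_prod iR iS p ->
           (iS (h p).1).1 = (iR p.1).1 /\ (iR (h p).2).2 = (iS p.2).2)].

Definition eqrel_join (X : Type) (E F : set (X * X)) : set (X * X) :=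
  [set p | forall T : set (X * X), is_equivalence T ->
             E `<=` T -> F `<=` T -> T p].

From HB Require Import structures.
From mathcomp Require Import all_boot all_order all_algebra.
From mathcomp Require Import all_classical all_reals all_analysis.
Local Open Scope classical_set_scope.

(* The homeomorphism R x_X S -> S x_X R of transversality preserves r x s, so
   the composites R o S and S o R coincide; two commuting equivalence
   relations compose to an equivalence relation, which is then their join.
   Injectivity of r x s only uses R n S = Delta: if (x, y, z) and (x, y', z)
   are composable, then y R y' and y S y', hence y = y'. *)

Definition comp_rel {X : Type} (E F : set (X * X)) : set (X * X) :=
  [set p | exists y, E (p.1, y) /\ F (y, p.2)].

Section CommutingEquivalences.
Context {X : Type} {E F : set (X * X)}.
Hypotheses (eqE : is_equivalence E) (eqF : is_equivalence F).

Lemma comp_rel_equivalence :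
  comp_rel E F = comp_rel F E -> is_equivalence (comp_rel E F).
Proof.
have [reflE symE transE] := eqE; have [reflF symF transF] := eqF.
move=> EF_FE; split.
- by move=> x; exists x.
- move=> x z [y [Exy Fyz]]; rewrite EF_FE.
  by exists y; split; [exact: symF | exact: symE].
- move=> x z v [y [Exy Fyz]] [u [Ezu Fuv]].
  have : comp_rel F E (y, u) by exists z.
  rewrite -EF_FE => -[w [Eyw Fwu]].
  by exists w; split; [exact: transE Exy Eyw | exact: transF Fwu Fuv].
Qed.

Lemma eqrel_join_comp_rel :
  comp_rel E F = comp_rel F E -> eqrel_join E F = comp_rel E F.
Proof.
have [reflE _ _] := eqE; have [reflF _ _] := eqF.
move=> EF_FE; apply/seteqP; split.
  move=> p; apply; first exact: comp_rel_equivalence.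
    by move=> [x y] Exy; exists y.
  by move=> [x y] Fxy; exists x.
by move=> [x z] [y [Exy Fyz]] T [_ _ transT] ET FT; exact: transT (ET _ Exy) (FT _ Fyz).
Qed.

End CommutingEquivalences.

Section FiberProduct.
Context {X G H : Type} {iR : G -> X * X} {iS : H -> X * X}.

Lemma rs_map_fiber_prod :
  rs_map iR iS @` fiber_prod iR iS = comp_rel (range iR) (range iS).
Proof.
apply/seteqP; split.
  move=> _ [[a b] /= ab_comp <-]; rewrite /rs_map /=; exists (iR a).2; split.
    by exists a => //; case: (iR a).
  by exists b => //; rewrite ab_comp; case: (iS b).
move=> [x z] [y [[a _ iRa] [b _ iSb]]].
by exists (a, b); rewrite /fiber_prod /rs_map /= ?iRa ?iSb.
Qed.

Lemma rs_map_inj : injective iR -> injective iS ->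
  is_equivalence (range iR) -> is_equivalence (range iS) ->
  (forall x y, range iR (x, y) -> range iS (x, y) -> x = y) ->
  {in fiber_prod iR iS &, injective (rs_map iR iS)}.
Proof.
move=> iR_inj iS_inj [_ symR transR] [_ symS transS] RS_diag [a b] [a' b'].
rewrite !inE /fiber_prod /rs_map /=.
have Ra : range iR (iR a) by exists a.
have Ra' : range iR (iR a') by exists a'.
have Sb : range iS (iS b) by exists b.
have Sb' : range iS (iS b') by exists b'.
move: Ra Ra' Sb Sb' (iR_inj a a') (iS_inj b b').
case: (iR a) => x y; case: (iR a') => x' y'.
case: (iS b) => w z; case: (iS b') => w' z' /= Rxy Rx'y' Swz Sw'z' eq_a eq_b.
move=> yw y'w' [xx' zz']; subst w w' x' z'.
have yy' : y = y'.
  apply: RS_diag; first exact: transR (symR _ _ Rxy) Rx'y'.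
  exact: transS Swz (symS _ _ Sw'z').
by rewrite yy' in eq_a eq_b; rewrite eq_a // eq_b.
Qed.

End FiberProduct.

Lemma transverse_comp_relC {X GR GS : topologicalType}
    {iR : GR -> X * X} {iS : GS -> X * X} :
  transverse iR iS -> comp_rel (range iR) (range iS) = comp_rel (range iS) (range iR).
Proof.
move=> [_ [h [k [[hF kF] kh hk _ h_rs]]]].
rewrite -!rs_map_fiber_prod; apply/seteqP; split.
  move=> _ [p p_comp <-]; exists (h p); first exact: hF.
  by rewrite /rs_map; case: (h_rs p p_comp) => -> ->.
move=> _ [q q_comp <-]; exists (k q); first exact: kF.
by rewrite -{2}(hk q q_comp) /rs_map; case: (h_rs _ (kF q q_comp)) => -> ->.
Qed.

Theorem lemma3p2 (X GR GS : topologicalType)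
  (iR : GR -> X * X) (iS : GS -> X * X) :
  compact [set: X] -> metrizable X -> zero_dim_space X ->
  etale_eqrel iR -> etale_eqrel iS -> transverse iR iS ->
  [/\ eqrel_join (range iR) (range iS) = rs_map iR iS @` fiber_prod iR iS,
      eqrel_join (range iR) (range iS) = rs_map iS iR @` fiber_prod iS iR,
      {in fiber_prod iR iS &, injective (rs_map iR iS)} &
      {in fiber_prod iS iR &, injective (rs_map iS iR)}].
Proof.
move=> _ _ _ [[iR_inj eqR _] _ _ _ _] [[iS_inj eqS _] _ _ _ _] RS_trans.
have RS_comm := transverse_comp_relC RS_trans.
have RS_diag := RS_trans.1.
have join_comp := eqrel_join_comp_rel eqR eqS RS_comm.
split.
- by rewrite join_comp rs_map_fiber_prod.
- by rewrite join_comp RS_comm rs_map_fiber_prod.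
- exact: rs_map_inj.
- by apply: rs_map_inj => // x y Sxy Rxy; exact: RS_diag.
Qed.
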